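(* Let $\mathcal{F}\subseteq\mathcal{P}(\omega)$ be a free filter. Then $\mathcal{F}\times 2$ is homeomorphic to $\mathcal{F}$.
   Context: $\mathcal{P}(\omega)$ carries the Cantor set topology, obtained by identifying each subset of $\omega$ with its characteristic function in $2^\omega$; $\mathcal{F}$ has the subspace topology, and $2=\{0,1\}$ is discrete. A filter on $\omega$ is free if it contains all cofinite subsets of $\omega$ (and does not contain $\emptyset$). *)

From HB Require Import structures.
From mathcomp Require Import all_boot all_order all_algebra.
From mathcomp Require Import all_classical all_reals all_analysis.
Set Implicit Arguments. Unset Strict Implicit. Unset Printing Implicit Defensive.
Local Open Scope classical_set_scope.

(* P(omega) is identified with the Cantor space 2^omega = cantor_space
   (nat -> bool with the product topology of discrete bool): a subset
   of omega is its characteristic function. *)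

Definition cofinite (a : cantor_space) : Prop := finite_set [set n | ~~ a n].

Definition free_filter (F : set cantor_space) : Prop :=
  [/\ (forall a b : cantor_space, F a -> (forall n, a n -> b n) -> F b),
      (forall a b : cantor_space, F a -> F b -> F (fun n => a n && b n)),
      (forall a : cantor_space, cofinite a -> F a) &
      ~ F (fun _ => false)].

Definition homeomorphic_subspaces {T U : topologicalType}
  (A : set T) (B : set U) : Prop :=
  exists (f : T -> U) (g : U -> T),
    [/\ (forall x, A x -> B (f x) /\ g (f x) = x),
        (forall y, B y -> A (g y) /\ f (g y) = y),
        {within A, continuous f} &
        {within B, continuous g}].

From HB Require Import structures.
From mathcomp Require Import all_boot all_order all_algebra.
From mathcomp Require Import all_classical all_reals all_analysis.
Local Open Scope classical_set_scope.

(* Idea: an injection [s] of omega whose range misses exactly one point [p]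
   turns [c |-> (c \o s, c p)] into a homeomorphism of 2^omega onto
   2^omega x 2, which carries [F] onto [F x 2] as soon as [F] is invariant
   under precomposition with [s].  If some [X] in [F] has an infinite
   complement, let [s] be a Hilbert-hotel shift along an enumeration of that
   complement: it fixes [X] pointwise, so [c] and [c \o s] agree on a member
   of [F].  Otherwise [F] is the Frechet filter of cofinite sets, which is
   invariant under any such [s]. *)

Lemma continuous_prod_topology (T : topologicalType) (I : eqType)
    (K : I -> topologicalType) (h : T -> prod_topology K) :
  (forall i, continuous (fun x => h x i)) -> continuous h.
Proof.
move=> hc x; apply/cvg_sup => i; apply/cvg_image => //.
  apply/seteqP; split => // b _.
  by exists (dfwith (h x) i b) => //; rewrite dfwithin.
move=> B /hc hB; exists [set g : prod_topology K | B (g i)]; first exact: hB.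
apply/seteqP; split => [_ [g Bg <-] //|b Bb].
by exists (dfwith (h x) i b); rewrite /= dfwithin.
Qed.

Lemma continuous_reindex (s : nat -> nat) :
  continuous (fun c : cantor_space => (c \o s : cantor_space)).
Proof.
apply: continuous_prod_topology => n.
exact: (@proj_continuous nat (fun _ => bool) (s n)).
Qed.

Lemma free_filter_congr {F : set cantor_space} {X c d : cantor_space} :
  free_filter F -> F X -> (forall n, X n -> c n = d n) -> F c <-> F d.
Proof.
move=> [up meet _ _] FX cd.
suff agree a b : (forall n, X n -> a n = b n) -> F a -> F b.
  by split; apply: agree => n /cd ->.
move=> ab Fa; apply: (up (fun n => a n && X n)); first exact: meet.
by move=> n /andP[an Xn]; rewrite -ab.
Qed.

Section reindexing.
Context {s : nat -> nat} {p : nat}.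
Hypotheses (s_inj : injective s) (range_s : range s = ~` [set p]).

Let t := pinv [set: nat] s.

Let sK : cancel s t.
Proof. by move=> m; apply: pinvKV; [exact: in2W | rewrite inE]. Qed.

Let tK n : n != p -> s (t n) = n.
Proof. by move=> /eqP np; apply: pinvK; rewrite inE range_s. Qed.

Lemma cofinite_reindex (c : cantor_space) : cofinite (c \o s) <-> cofinite c.
Proof.
rewrite /cofinite; split => [fin_cs|fin_c]; last first.
  by apply: (finite_preimage (f := s)) fin_c => a b _ _; apply: s_inj.
apply: (sub_finite_set (B := [set p] `|` s @` [set m | ~~ c (s m)])).
  move=> n /= cn; have [->|np] := eqVneq n p; [by left | right].
  by exists (t n); rewrite /= tK.
by rewrite finite_setU; split; [exact: finite_set1 | exact: finite_image].
Qed.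

Lemma reindex_homeomorphic (F : set cantor_space) :
  (forall c, F (c \o s) <-> F c) ->
  homeomorphic_subspaces (F `*` [set: bool]) F.
Proof.
move=> F_inv.
exists (fun ab : cantor_space * bool =>
  (fun n => if n == p then ab.2 else ab.1 (t n)) : cantor_space).
exists (fun c : cantor_space => (c \o s : cantor_space, c p)).
have s_p m : (s m == p) = false.
  by apply/negbTE/eqP => smp; move: (imageT s m); rewrite range_s /= smp.
split.
- move=> [a b] [/= Fa _].
  have abs : (fun n => if n == p then b else a (t n)) \o s = a.
    by apply/funext => m /=; rewrite s_p sK.
  by rewrite abs eqxx; split => //; apply/F_inv; rewrite abs.
- move=> c Fc; split; first by split => //=; apply/F_inv.
  by apply/funext => n /=; case: eqVneq => [->|/tK ->].
- apply: continuous_subspaceT; apply: continuous_prod_topology => n.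
  case: eqP => _ x; first exact: cvg_snd.
  apply: (@continuous_comp _ _ _ fst (fun a : cantor_space => a (t n)) x).
    exact: cvg_fst.
  exact: (@proj_continuous nat (fun _ => bool) (t n)).
- apply: continuous_subspaceT => c.
  exact: cvg_pair (continuous_reindex s c)
    (@proj_continuous _ (fun=> bool) p c).
Qed.

End reindexing.

Lemma enum_infinite_set {Y : set nat} :
  infinite_set Y -> exists e : nat -> nat, injective e /\ range e = Y.
Proof.
move=> /(eq_card_nat (countableP Y))/card_esym/card_set_bijP[e [eY e_inj Ye]].
exists e; split.
  by move=> a b; apply: e_inj; rewrite inE.
by apply/seteqP; split => [_ [k _ <-]|n /Ye [k _ <-]]; [exact: eY | exists k].
Qed.

Lemma hotel_shift {e : nat -> nat} : injective e ->
  exists s : nat -> nat,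
    [/\ injective s, range s = ~` [set e 0] & forall n, ~ range e n -> s n = n].
Proof.
move=> e_inj; pose u := pinv [set: nat] e.
have uK : cancel e u.
  by move=> k; apply: pinvKV; [exact: in2W | rewrite inE].
have Ku n : range e n -> e (u n) = n.
  by move=> en; apply: pinvK; rewrite inE.
pose s n := if `[< range e n >] then e (u n).+1 else n.
have s_in n : range e n -> s n = e (u n).+1 by move=> en; rewrite /s asboolT.
have s_out n : ~ range e n -> s n = n by move=> en; rewrite /s asboolF.
exists s; split => //.
- move=> a b.
  have [ea|ea] := pselect (range e a); have [eb|eb] := pselect (range e b).
  + by rewrite !s_in // => /e_inj [] /(congr1 e); rewrite !Ku.
  + by rewrite s_in // s_out // => ab; case: eb; exists (u a).+1.
  + by rewrite s_out // s_in // => ab; case: ea; exists (u b).+1.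
  + by rewrite !s_out.
- apply/seteqP; split => [_ [m _ <-] /=|n /= ne0].
    have [em|em] := pselect (range e m); first by rewrite s_in // => /e_inj.
    by rewrite s_out // => m0; apply: em; exists 0.
  have [[k _ ekn]|en] := pselect (range e n); last by exists n; rewrite ?s_out.
  case: k ekn => [/esym/ne0 //|k <-].
  by exists (e k) => //; rewrite s_in ?uK //; exists k.
Qed.

Theorem mainTheorem4 (F : set cantor_space) :
  free_filter F ->
  homeomorphic_subspaces (F `*` [set: bool]) F.
Proof.
move=> FF.
have [[X [FX X_coinf]]|F_cof] := pselect (exists X, F X /\ ~ cofinite X).
- have [e [e_inj range_e]] := enum_infinite_set X_coinf.
  have [s [s_inj range_s s_id]] := hotel_shift e_inj.
  apply: (reindex_homeomorphic s_inj range_s) => c.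
  apply: (free_filter_congr FF FX) => n Xn.
  by rewrite /= s_id // range_e /= Xn.
- have [_ _ cof _] := FF.
  have -> : F = cofinite.
    apply/funext => c; apply/propext; split=> [Fc|/cof //].
    by apply: contrapT => nc; apply: F_cof; exists c.
  have [s [s_inj range_s _]] := hotel_shift (@inj_id nat).
  apply: (reindex_homeomorphic s_inj range_s).
  exact: (cofinite_reindex s_inj range_s).
Qed.
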